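(* Let $(\Omega,\mathcal{H},\mathbb{E})$ be a nonlinear expectation space and let $\{X_\alpha\}_{\alpha\in\mathcal{A}}$ be a family of $\mathbb{R}^d$-valued random variables on it (so $\varphi(X_\alpha)\in\mathcal{H}$ for $\varphi\in C_b(\mathbb{R}^d)$). Let $(\bar\Omega,\bar{\mathcal{H}},\bar{\mathbb{E}})$ be a sublinear expectation space, $l>0$ fixed, and $\bar X=(\bar X_1,\dots,\bar X_d)$ with $\bar X_i\in\bar{\mathcal{H}}$ and $\psi(\bar X)\in\bar{\mathcal{H}}$ for every Borel $\psi:\mathbb{R}^d\to\mathbb{R}$ with $|\psi(x)|\le c(1+|x|^l)$. Suppose \[ \mathbb{E}[\varphi(X_\alpha)]-\mathbb{E}[\psi(X_\alpha)]\le\bar{\mathbb{E}}[\varphi(\bar X)-\psi(\bar X)]\quad\text{for all }\alpha\in\mathcal{A},\ \varphi,\psi\in C_b(\mathbb{R}^d). \] Then the family of distributions $\{\mathbb{F}_{X_\alpha}\}_{\alpha\in\mathcal{A}}$, $\mathbb{F}_{X_\alpha}[\varphi]:=\mathbb{E}[\varphi(X_\alpha)]$ for $\varphi\in C_b(\mathbb{R}^d)$, is weakly compact: every sequence $\{\mathbb{F}_{X_{\alpha_n}}\}_{n\ge1}$ has a subsequence $\{\mathbb{F}_{X_{\alpha_{n_i}}}\}_{i\ge1}$ such that $\{\mathbb{F}_{X_{\alpha_{n_i}}}[\varphi]\}_{i\ge1}$ is Cauchy for every $\varphi\in C_b(\mathbb{R}^d)$.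
   Context: A nonlinear expectation space $(\Omega,\mathcal{H},\mathbb{E})$: $\mathcal{H}$ is a linear space of real functions on a set $\Omega$ with $1\in\mathcal{H}$ and $|\xi|\in\mathcal{H}$ for $\xi\in\mathcal{H}$; $\mathbb{E}:\mathcal{H}\to\mathbb{R}$ satisfies $\mathbb{E}[c]=c$ for constants and $\mathbb{E}[X]\ge\mathbb{E}[Y]$ when $X\ge Y$. A sublinear expectation space is such a space where moreover $\mathbb{E}[X+Y]\le\mathbb{E}[X]+\mathbb{E}[Y]$ and $\mathbb{E}[\lambda X]=\lambda\mathbb{E}[X]$ for $\lambda\ge0$. $C_b(\mathbb{R}^d)$ denotes bounded continuous real functions on $\mathbb{R}^d$. *)

From HB Require Import structures.
From mathcomp Require Import all_boot all_order all_algebra.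
From mathcomp Require Import all_classical all_reals all_analysis.
Set Implicit Arguments. Unset Strict Implicit. Unset Printing Implicit Defensive.
Import Order.TTheory GRing.Theory Num.Theory.
Import numFieldNormedType.Exports.
Local Open Scope classical_set_scope.
Local Open Scope ring_scope.

(* R^d is modelled as row vectors 'rV[R]_d with MathComp-Analysis' (max) norm. *)

Definition Cb (R : realType) (d : nat) (phi : 'rV[R]_d -> R) : Prop :=
  continuous phi /\ exists M : R, forall x, `|phi x| <= M.

Definition borel_set (R : realType) (d : nat) (A : set 'rV[R]_d) : Prop :=
  smallest (sigma_algebra setT) (@open 'rV[R]_d) A.

Definition borel_fun (R : realType) (d : nat) (psi : 'rV[R]_d -> R) : Prop :=
  forall B : set R, measurable B -> borel_set (psi @^-1` B).

Definition nonlinear_expectation_space (R : realType) (Omega : Type)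
  (H : set (Omega -> R)) (E : (Omega -> R) -> R) : Prop :=
  [/\
      (forall X Y, H X -> H Y -> H (X \+ Y)),
      (forall (c : R) X, H X -> H (fun w => c * X w)),
      H (fun _ => 1) &
      (forall X, H X -> H (fun w => `|X w|))] /\
  (forall c : R, E (fun _ => c) = c) /\
  (forall X Y, H X -> H Y -> (forall w, Y w <= X w) -> E Y <= E X).

Definition sublinear_expectation_space (R : realType) (Omega : Type)
  (H : set (Omega -> R)) (E : (Omega -> R) -> R) : Prop :=
  [/\ nonlinear_expectation_space H E,
      (forall X Y, H X -> H Y -> E (X \+ Y) <= E X + E Y) &
      (forall (lam : R) X, 0 <= lam -> H X -> E (fun w => lam * X w) = lam * E X)].

Definition cauchy_seqR (R : realType) (u : nat -> R) : Prop :=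
  forall e : R, 0 < e -> exists N : nat, forall i j : nat,
    (N <= i)%N -> (N <= j)%N -> `|u i - u j| < e.

From mathcomp Require Import all_boot all_order all_algebra.
From mathcomp Require Import all_classical all_reals all_analysis.
From mathcomp Require Import ring lra.
Import Order.TTheory GRing.Theory Num.Theory.
Import numFieldNormedType.Exports.
Local Open Scope classical_set_scope.
Local Open Scope ring_scope.

Set Implicit Arguments.
Unset Strict Implicit.
Unset Printing Implicit Defensive.

(* By the domination hypothesis, E[phi(X_a)] - E[psi(X_a)] is bounded by
   Eb[(phi - psi)(Xb)], uniformly in a; if |phi - psi| <= K everywhere and <= e
   on the ball of radius N, this is at most e + K N^-l Eb[|Xb|^l], which is small
   for large N.  Every phi in C_b is approximated in this sense by a member of a
   countable family of bounded Lipschitz functions (clipped upper envelopes of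
   cones with apices on rational grids), so it suffices to extract a subsequence
   along which E[g(X_a)] is Cauchy for every g of the family: this is
   Bolzano-Weierstrass followed by a diagonal argument. *)

Definition bounded_seqR (R : realType) (u : nat -> R) : Prop :=
  exists B : R, forall n, `|u n| <= B.

Lemma bounded_seqR_comp (R : realType) (u : nat -> R) (f : nat -> nat) :
  bounded_seqR u -> bounded_seqR (u \o f).
Proof. by case=> B uB; exists B => n; apply: uB. Qed.

Lemma homo_ltn_infl (f : nat -> nat) :
  {homo f : i j / (i < j)%N} -> forall n, (n <= f n)%N.
Proof. by move=> /leq_mono; exact: unstable.mono_leq_infl. Qed.

Lemma cvgn_cauchy_seqR (R : realType) (u : nat -> R) : cvgn u -> cauchy_seqR u.
Proof.
move=> /cvg_ex[l /cvgrPdist_lt ul] e e0.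
have [N _ HN] := ul _ (divr_gt0 e0 (ltr0n R 2)).
exists N => i j Ni Nj.
rewrite (_ : u i - u j = (l - u j) - (l - u i)); last by ring.
by rewrite (splitr e) (le_lt_trans (ler_normB _ _)) // ltrD // HN.
Qed.

Lemma bounded_cauchy_subseq (R : realType) (u : nat -> R) : bounded_seqR u ->
  exists2 f : nat -> nat, {homo f : i j / (i < j)%N} & cauchy_seqR (u \o f).
Proof.
case=> B uB.
have bu : bounded_fun u.
  exists B; split; first exact: num_real.
  by move=> M BM n _; apply: le_trans (uB n) (ltW BM).
have [f f_mono cvg_uf] := bolzano_weierstrass bu.
exists f; last exact: cvgn_cauchy_seqR.
by move=> i j; rewrite !ltnNge -!leEnat f_mono.
Qed.

Section Diagonal.
Variables (R : realType) (sel : (nat -> R) -> nat -> nat).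
Hypothesis sel_homo : forall v, {homo sel v : i j / (i < j)%N}.
Hypothesis sel_cauchy : forall v, bounded_seqR v -> cauchy_seqR (v \o sel v).
Variable u : nat -> nat -> R.
Hypothesis u_bounded : forall k, bounded_seqR (u k).

Fixpoint diag_sel (k : nat) : nat -> nat :=
  if k is k'.+1 then diag_sel k' \o sel (u k \o diag_sel k') else sel (u 0).

Lemma diag_sel_homo k : {homo diag_sel k : i j / (i < j)%N}.
Proof.
by elim: k => [|k IHk] //= i j ij; apply: IHk; apply: sel_homo.
Qed.

Lemma diag_sel_cauchy k : cauchy_seqR (u k \o diag_sel k).
Proof.
case: k => [|k]; first exact: sel_cauchy.
exact: sel_cauchy (bounded_seqR_comp _ (u_bounded k.+1)).
Qed.

Lemma diag_sel_refine k i : (k <= i)%N ->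
  exists2 rho : nat -> nat, {homo rho : a b / (a < b)%N} &
    forall n, diag_sel i n = diag_sel k (rho n).
Proof.
elim: i => [|i IHi]; first by rewrite leqn0 => /eqP->; exists id.
rewrite leq_eqVlt ltnS => /orP[/eqP->|/IHi[rho rho_homo rhoE]]; first by exists id.
exists (rho \o sel (u i.+1 \o diag_sel i)) => [a b ab|n /=]; last exact: rhoE.
exact/rho_homo/sel_homo.
Qed.

Definition diagonal (n : nat) : nat := diag_sel n n.

Lemma diagonal_homo : {homo diagonal : i j / (i < j)%N}.
Proof.
apply: homo_ltn => [y x z|i]; first exact: ltn_trans.
apply: diag_sel_homo; exact: homo_ltn_infl (sel_homo _) i.+1.
Qed.

Lemma diagonal_cauchy k : cauchy_seqR (u k \o diagonal).
Proof.
move=> e e0; have [N HN] := diag_sel_cauchy k e0.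
exists (maxn N k) => i j; rewrite !geq_max => /andP[Ni ki] /andP[Nj kj].
have [rhoi /homo_ltn_infl rhoi_ge rhoiE] := diag_sel_refine ki.
have [rhoj /homo_ltn_infl rhoj_ge rhojE] := diag_sel_refine kj.
rewrite /= /diagonal rhoiE rhojE.
by apply: HN; [exact: leq_trans Ni (rhoi_ge i)|exact: leq_trans Nj (rhoj_ge j)].
Qed.

End Diagonal.

Lemma diagonal_cauchy_subseq (R : realType) (I : countType) (u : I -> nat -> R) :
  (forall k, bounded_seqR (u k)) ->
  exists2 s : nat -> nat, {homo s : i j / (i < j)%N} & forall k, cauchy_seqR (u k \o s).
Proof.
move=> u_bounded.
have [sel sel_spec] : {sel : (nat -> R) -> nat -> nat & forall v,
    {homo sel v : i j / (i < j)%N} /\ (bounded_seqR v -> cauchy_seqR (v \o sel v))}.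
  apply: (@choice _ _ (fun v f => {homo f : i j / (i < j)%N} /\
    (bounded_seqR v -> cauchy_seqR (v \o f)))) => v.
  have [/bounded_cauchy_subseq[f f_homo f_cauchy]|v_unbounded] := pselect (bounded_seqR v).
    by exists f.
  by exists id; split => // /v_unbounded.
pose w n := if unpickle n is Some k then u k else fun=> 0.
have w_bounded n : bounded_seqR (w n).
  by rewrite /w; case: unpickle => [k|]; last by exists 0 => _; rewrite normr0.
exists (diagonal sel w); first exact: (diagonal_homo (fun v => (sel_spec v).1)).
move=> k; have := diagonal_cauchy (fun v => (sel_spec v).1) (fun v => (sel_spec v).2)
  w_bounded (pickle k).
by rewrite /w pickleK.
Qed.

Lemma lipschitz_continuous (R : realFieldType) (V W : normedModType R) (k : R)
    (f : V -> W) :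
  k.-lipschitz f -> continuous f.
Proof.
move=> f_lip x; apply/cvgrPdist_lt => e e0.
have k1 : 0 < `|k| + 1 by rewrite ltr_wpDl.
apply/nbhs_ballP; exists (e / (`|k| + 1)); first exact: divr_gt0.
move=> y; rewrite -ball_normE /= => xy.
have := f_lip (x, y) (conj I I) => /= fxy.
have kk : k * `|x - y| <= `|k| * (e / (`|k| + 1)).
  by apply: le_trans (ler_wpM2r (normr_ge0 _) (ler_norm k)) _; rewrite ler_wpM2l // ltW.
apply: le_lt_trans fxy (le_lt_trans kk _).
by rewrite mulrA ltr_pdivrMr // mulrDr mulr1 mulrC ltrDl.
Qed.

Lemma dist_max_le (R : realDomainType) (a b a' b' e : R) :
  `|a - a'| <= e -> `|b - b'| <= e -> `|Num.max a b - Num.max a' b'| <= e.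
Proof.
rewrite !ler_norml => /andP[? ?] /andP[? ?].
by case: (leP a b) => ?; case: (leP a' b') => ? /=; apply/andP; split; lra.
Qed.

Lemma dist_min_le (R : realDomainType) (a b a' b' e : R) :
  `|a - a'| <= e -> `|b - b'| <= e -> `|Num.min a b - Num.min a' b'| <= e.
Proof.
rewrite !ler_norml => /andP[? ?] /andP[? ?].
by case: (leP a b) => ?; case: (leP a' b') => ? /=; apply/andP; split; lra.
Qed.

Lemma dist_bigmax_le (R : realDomainType) (I : Type) (s : seq I) (F G : I -> R)
    (x0 e : R) :
  0 <= e -> (forall i, `|F i - G i| <= e) ->
  `|\big[Num.max/x0]_(i <- s) F i - \big[Num.max/x0]_(i <- s) G i| <= e.
Proof.
move=> e0 FG; elim: s => [|a s IHs]; first by rewrite !big_nil subrr normr0.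
by rewrite !big_cons; apply: dist_max_le.
Qed.

Lemma continuous_borel_fun (R : realType) (d : nat) (f : 'rV[R]_d -> R) :
  continuous f -> borel_fun f.
Proof.
move=> f_cont B mB.
pose T := g_sigma_algebraType (@open 'rV[R]_d).
have mf : measurable_fun (setT : set T) (f : T -> R).
  apply: (@measurability _ _ _ _ _ _ (@measurable_realfun.RGenOInfty.G R)).
    exact: measurable_realfun.RGenOInfty.measurableE.
  move=> _ [_ [x ->] <-]; apply: sub_sigma_algebra; rewrite setTI.
  by move/continuousP : f_cont; apply; exact: rray_open.
by have := mf measurableT B mB; rewrite setTI.
Qed.

Lemma borel_fun_norm_powR (R : realType) (d : nat) (l : R) :
  borel_fun (fun x : 'rV[R]_d => `|x| `^ l).
Proof.
move=> B mB.
have := measurable_realfun.measurable_powR l measurableT mB; rewrite setTI => mpB.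
exact: (@continuous_borel_fun R d (fun x => `|x|) (@norm_continuous _ _) _ mpB).
Qed.

Lemma compact_ball_cover (R : realType) (V : normedModType R) (K : set V)
    (r : V -> R) :
  compact K -> (forall z, 0 < r z) ->
  exists s : seq V, forall x, K x -> exists2 z, z \in s & `|z - x| < r z.
Proof.
rewrite compact_cover => K_cpt r_gt0.
have [|D _ KD] := K_cpt V setT (fun z => ball z (r z)) (fun z _ => ball_open z _).
  by move=> x _; exists x => //; exact: ballxx.
exists (finmap.enum_fset D) => x /KD[z Dz]; rewrite -ball_normE.
by exists z.
Qed.

Lemma compact_unif_continuous (R : realType) (V : normedModType R) (K : set V)
    (f : V -> R) (e : R) :
  compact K -> continuous f -> 0 < e ->
  exists2 del : R, 0 < del &
    forall x y, K x -> `|x - y| < del -> `|f x - f y| < e.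
Proof.
move=> K_cpt f_cont e0.
have [r r_spec] : {r : V -> R & forall z, 0 < r z /\
    forall y, `|z - y| < r z -> `|f z - f y| < e / 2}.
  apply: (@choice _ _ (fun z rz => 0 < rz /\
    forall y, `|z - y| < rz -> `|f z - f y| < e / 2)) => z.
  have /(@cvgrPdist_lt _ _ _ (nbhs z) (nbhs_filter z)) fz := f_cont z.
  have /nbhs_ballP[rz rz0 {}fz] := fz _ (divr_gt0 e0 (ltr0n R 2)).
  by exists rz; split => // y zy; apply: fz; rewrite -ball_normE.
have r2_gt0 z : 0 < r z / 2 by rewrite divr_gt0 // (r_spec z).1.
have [s s_cover] := compact_ball_cover K_cpt r2_gt0.
exists (\big[Num.min/1]_(z <- s) (r z / 2)); first by apply: lt_bigmin.
move=> x y Kx xy; have [z zs zx] := s_cover x Kx.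
have {}xy : `|x - y| < r z / 2.
  exact: lt_le_trans xy (ge_bigmin_seq 1 z xpredT (fun z => r z / 2) zs isT).
have zy : `|z - y| < r z by apply: le_lt_trans (ler_distD x z y) _; lra.
have zx' : `|z - x| < r z by have := normr_ge0 (z - x); lra.
have := (r_spec z).2 x zx'; have := (r_spec z).2 y zy.
move=> fzy fzx; rewrite -(subrKA (f z)) (le_lt_trans (ler_normD _ _)) //.
by rewrite (splitr e) ltrD // distrC.
Qed.

Lemma compact_norm_le (R : realType) (d : nat) (N : R) :
  compact [set x : 'rV[R]_d | `|x| <= N].
Proof.
have -> : [set x : 'rV[R]_d | `|x| <= N] = closed_ball_ Num.norm 0 N.
  by apply/funext => x /=; rewrite /closed_ball_ /= add0r normrN.
apply: bounded_closed_compact; last exact: closed_closed_ball_.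
exists N; split; first exact: num_real.
by move=> M NM x; rewrite /closed_ball_ /= add0r normrN => /le_lt_trans/(_ NM)/ltW.
Qed.

Section Grid.
Variables (R : realType) (d : nat).

Lemma norm_rV_le (v : 'rV[R]_d) (r : R) :
  0 <= r -> (forall i, `|v ord0 i| <= r) -> `|v| <= r.
Proof.
move=> r0 vr; have -> : `|v| = mx_norm v by []; rewrite mx_normrE.
by apply: bigmax_le => // -[i j] _ /=; rewrite (ord1 i).
Qed.

Definition grid_point (m : nat) (p : 'rV[int]_d) : 'rV[R]_d :=
  map_mx (fun k : int => k%:~R / m%:R) p.

Definition grid_round (m : nat) (z : 'rV[R]_d) : 'rV[int]_d :=
  map_mx (fun r => Num.floor (r * m%:R)) z.

Lemma floor_mul_div_bounds (y : R) (m : nat) : (0 < m)%N ->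
  0 <= y - (Num.floor (y * m%:R))%:~R / m%:R <= m%:R^-1.
Proof.
move=> m_gt0; have mR : 0 < m%:R :> R by rewrite ltr0n.
have /andP[] := floor_itv (y * m%:R); rewrite intrD.
set f := (Num.floor (y * m%:R))%:~R => fl fu.
have -> : y - f / m%:R = (y * m%:R - f) / m%:R by field; rewrite pnatr_eq0 -lt0n.
rewrite divr_ge0 ?subr_ge0 ?ler0n //= -[leRHS]mul1r ler_wpM2r ?invr_ge0 ?ler0n //.
lra.
Qed.

Lemma grid_round_dist (m : nat) (z : 'rV[R]_d) : (0 < m)%N ->
  `|z - grid_point m (grid_round m z)| <= m%:R^-1.
Proof.
move=> m_gt0; apply: norm_rV_le; first by rewrite invr_ge0.
move=> i; rewrite !mxE.
by have /andP[? ?] := floor_mul_div_bounds (z ord0 i) m_gt0; rewrite ger0_norm.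
Qed.

Definition grid_cone (m L : nat) (pq : 'rV[int]_d * int) (x : 'rV[R]_d) : R :=
  pq.2%:~R / m%:R - L%:R * `|x - grid_point m pq.1|.

Lemma grid_cone_dist (m L : nat) (pq : 'rV[int]_d * int) (x y : 'rV[R]_d) :
  `|grid_cone m L pq x - grid_cone m L pq y| <= L%:R * `|x - y|.
Proof.
rewrite /grid_cone (_ : forall a b c : R, a - b - (a - c) = c - b); last by move=> *; ring.
rewrite -mulrBr normrM ger0_norm // ler_wpM2l //.
by apply: le_trans (ler_dist_dist _ _) _; rewrite opprB addrA subrK distrC.
Qed.

(* The code (s, m, L, c) stands for the function
   x |-> min(c, max(-c, max_{(p, q) in s} (q/m - L |x - p/m|))),
   an envelope of cones of slope L with apices on the grid (1/m) Z^(d+1);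
   codes form a countable type. *)
Definition grid_code := (seq ('rV[int]_d * int) * nat * nat * nat)%type.

Definition grid_fun (t : grid_code) (x : 'rV[R]_d) : R :=
  let: (s, m, L, c) := t in
  Num.min c%:R (\big[Num.max/- c%:R]_(pq <- s) grid_cone m L pq x).

Lemma grid_fun_bound (t : grid_code) (x : 'rV[R]_d) : `|grid_fun t x| <= t.2%:R.
Proof.
case: t => [[[s m] L] c] /=; rewrite ler_norml ge_min lexx orTb andbT.
by rewrite le_min bigmax_ge_id andbT; have := ler0n R c; lra.
Qed.

Lemma grid_fun_lipschitz (t : grid_code) : t.1.2%:R.-lipschitz (grid_fun t).
Proof.
case: t => [[[s m] L] c] [x y] _ /=.
apply: dist_min_le; first by rewrite subrr normr0 mulr_ge0.
by apply: dist_bigmax_le => [|pq]; [rewrite mulr_ge0 | exact: grid_cone_dist].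
Qed.

Lemma Cb_grid_fun (t : grid_code) : Cb (grid_fun t).
Proof.
split; first exact: lipschitz_continuous (grid_fun_lipschitz t).
by exists t.2%:R; exact: grid_fun_bound.
Qed.

End Grid.

Arguments grid_point {R d}.

Section GridApproximation.
Variables (R : realType) (d : nat) (phi : 'rV[R]_d -> R) (K : set 'rV[R]_d).
Variables (M e del : R) (m L : nat).
Hypothesis phi_bound : forall x, `|phi x| <= M.
Hypothesis phi_unif : forall x y, K x -> `|x - y| < del -> `|phi x - phi y| < e.
Hypothesis m_gt0 : (0 < m)%N.
Hypothesis m_del : m%:R^-1 < del / 2.
Hypothesis m_e : (2 * L%:R + 1) * m%:R^-1 < e.
Hypothesis L_del : 4 * M < L%:R * del.
(* [L_del] puts every cone with apex farther than del/2 from x below -M, and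
   [m_e] bounds the rounding error of the grid. *)

Let e_gt0 : 0 < e.
Proof. by apply: le_lt_trans m_e; rewrite divr_ge0 // addr_ge0 // mulr_ge0. Qed.

Definition grid_sample (z : 'rV[R]_d) : 'rV[int]_d * int :=
  (grid_round m z, Num.floor (phi z * m%:R)).

Lemma grid_cone_sample_le z x : K x -> grid_cone m L (grid_sample z) x <= phi x + e.
Proof.
move=> Kx; rewrite /grid_cone /=.
set q := (Num.floor (phi z * m%:R))%:~R / m%:R.
set p := grid_point m (grid_round m z).
have /andP[q_le _] : 0 <= phi z - q <= m%:R^-1 := floor_mul_div_bounds (phi z) m_gt0.
have zp : `|z - p| <= m%:R^-1 := grid_round_dist z m_gt0.
have /andP[_ phizM] : - M <= phi z <= M by rewrite -ler_norml.
have /andP[phixM _] : - M <= phi x <= M by rewrite -ler_norml.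
have [xp_lt|xp_ge] := ltP `|x - p| (del / 2).
  have xz : `|x - z| < del.
    apply: le_lt_trans (ler_distD p x z) _.
    by rewrite (distrC p z); have := m_del; lra.
  have /ltr_normlP[phi_xz _] := phi_unif Kx xz.
  have : 0 <= L%:R * `|x - p| by rewrite mulr_ge0.
  have e0 := e_gt0; lra.
have : L%:R * del / 2 <= L%:R * `|x - p| by rewrite -mulrA ler_wpM2l.
have := L_del; have e0 := e_gt0; lra.
Qed.

Lemma grid_cone_sample_gt z x : K x -> `|z - x| < m%:R^-1 ->
  phi x - 2 * e < grid_cone m L (grid_sample z) x.
Proof.
move=> Kx zx; rewrite /grid_cone /=.
set q := (Num.floor (phi z * m%:R))%:~R / m%:R.
set p := grid_point m (grid_round m z).
have /andP[_ q_ge] : 0 <= phi z - q <= m%:R^-1 := floor_mul_div_bounds (phi z) m_gt0.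
have zp : `|z - p| <= m%:R^-1 := grid_round_dist z m_gt0.
have minv_gt0 : 0 < m%:R^-1 :> R by rewrite invr_gt0 ltr0n.
have m_del1 : m%:R^-1 < del by have := m_del; lra.
have xz : `|x - z| < del by rewrite distrC (lt_trans zx).
have /ltr_normlP[_ phi_xz] := phi_unif Kx xz.
have xp : L%:R * `|x - p| <= L%:R * (2 / m%:R).
  rewrite ler_wpM2l // (le_trans (ler_distD z x p)) // (distrC x z); lra.
have m_e' : L%:R * (2 / m%:R) + m%:R^-1 < e.
  by move: m_e; rewrite mulrDl mul1r [2 * _]mulrC -mulrA.
lra.
Qed.

Lemma grid_fun_sample_dist (S : seq 'rV[R]_d) (c : nat) x :
  M < c%:R -> (exists2 z, z \in S & `|z - x| < m%:R^-1) -> K x ->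
  `|phi x - grid_fun ([seq grid_sample z | z <- S], m, L, c) x| <= 2 * e.
Proof.
move=> Mc [z zS zx] Kx; rewrite /grid_fun big_map.
set B := \big[Num.max/- c%:R]_(z <- S) _.
have /andP[phixM phixM'] : - M <= phi x <= M by rewrite -ler_norml.
have e0 := e_gt0.
have B_le : B <= phi x + e.
  apply: bigmax_le => [|z' _]; first lra.
  exact: grid_cone_sample_le.
have B_gt : phi x - 2 * e < B.
  apply: lt_le_trans (grid_cone_sample_gt Kx zx) _.
  exact: (le_bigmax_seq _ z xpredT _ zS).
by rewrite ler_norml; case: (leP c%:R B) => /= ?; apply/andP; split; lra.
Qed.

End GridApproximation.

Lemma grid_fun_approx (R : realType) (d : nat) (phi : 'rV[R]_d -> R) (M N eps : R) :
  continuous phi -> (forall x, `|phi x| <= M) -> 0 < eps ->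
  exists t : grid_code d, t.2%:R <= M + 1 /\
    forall x, `|x| <= N -> `|phi x - grid_fun t x| <= eps.
Proof.
move=> phi_cont phi_bound eps_gt0.
have M_ge0 : 0 <= M := le_trans (normr_ge0 _) (phi_bound 0).
have e_gt0 : 0 < eps / 2 by rewrite divr_gt0.
have [del del_gt0 phi_unif] :=
  compact_unif_continuous (@compact_norm_le R d N) phi_cont e_gt0.
pose c := (Num.truncn M).+1.
have [Mc cM] : M < c%:R /\ c%:R <= M + 1.
  by have /andP[? ?] := truncn_itv M_ge0; rewrite /c -natr1; split; lra.
pose L := (Num.truncn (4 * M / del)).+1.
have L_del : 4 * M < L%:R * del by rewrite -ltr_pdivrMr // truncnS_gt.
have r_gt0 : 0 < Num.min (del / 2) (eps / 2 / (2 * L%:R + 1)).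
  by rewrite lt_min !divr_gt0 // ltr_wpDl // mulr_ge0.
have [n _ /(_ n (leqnn n))] := near_infty_natSinv_lt (PosNum r_gt0).
rewrite lt_min /= => /andP[m_del m_lt].
have m_e : (2 * L%:R + 1) * n.+1%:R^-1 < eps / 2.
  by rewrite mulrC -ltr_pdivlMr // ltr_wpDl // mulr_ge0.
have minv_gt0 : 0 < n.+1%:R^-1 :> R by rewrite invr_gt0.
have [S S_cover] := compact_ball_cover (@compact_norm_le R d N) (fun=> minv_gt0).
exists ([seq grid_sample phi n.+1 z | z <- S], n.+1, L, c); split => // x xN.
have -> : eps = 2 * (eps / 2) by field.
exact: grid_fun_sample_dist phi_bound phi_unif _ m_del m_e L_del _ _ _ Mc (S_cover x xN) xN.
Qed.

Lemma nonlinear_expectation_cst (R : realType) (Omega : Type) (H : set (Omega -> R))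
    (E : (Omega -> R) -> R) (c : R) :
  nonlinear_expectation_space H E -> H (fun _ => c).
Proof.
case=> -[_ H_scale H1 _] _; have := H_scale c _ H1.
by congr H; apply/funext => w; rewrite mulr1.
Qed.

Lemma nonlinear_expectation_norm_le (R : realType) (Omega : Type)
    (H : set (Omega -> R)) (E : (Omega -> R) -> R) (Y : Omega -> R) (B : R) :
  nonlinear_expectation_space H E -> H Y -> (forall w, `|Y w| <= B) -> `|E Y| <= B.
Proof.
move=> HE HY YB; have [_ [E_cst E_mono]] := HE.
have H_cst c : H (fun _ => c) by exact: nonlinear_expectation_cst HE.
have YB' w : - B <= Y w <= B by rewrite -ler_norml.
rewrite ler_norml; apply/andP; split.
  by rewrite -[- B]E_cst; apply: E_mono => // w; case/andP: (YB' w).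
by rewrite -[B in _ <= B]E_cst; apply: E_mono => // w; case/andP: (YB' w).
Qed.

Lemma sublinear_expectation_le_affine (R : realType) (Omega : Type)
    (H : set (Omega -> R)) (E : (Omega -> R) -> R) (Y Z : Omega -> R) (c a : R) :
  sublinear_expectation_space H E -> H Y -> H Z -> 0 <= a ->
  (forall w, Y w <= c + a * Z w) -> E Y <= c + a * E Z.
Proof.
move=> [HE E_sub E_hom] HY HZ a_ge0 YZ.
have [[H_add H_scale _ _] [E_cst E_mono]] := HE.
have H_cst := nonlinear_expectation_cst c HE.
apply: le_trans (E_mono _ _ (H_add _ _ H_cst (H_scale a _ HZ)) HY YZ) _.
by rewrite (le_trans (E_sub _ _ H_cst (H_scale a _ HZ))) // E_cst E_hom.
Qed.

Lemma le_growth_powR (R : realType) (V : normedModType R) (g : V -> R) (K e N l : R) :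
  0 < N -> 0 <= l -> (forall x, `|g x| <= K) ->
  (forall x, `|x| <= N -> `|g x| <= e) ->
  forall x, g x <= e + K / N `^ l * `|x| `^ l.
Proof.
move=> N_gt0 l_ge0 gK ge x.
have NL_gt0 : 0 < N `^ l by rewrite powR_gt0.
have K_ge0 : 0 <= K := le_trans (normr_ge0 _) (gK x).
have tail_ge0 : 0 <= K / N `^ l * `|x| `^ l.
  by rewrite mulr_ge0 ?divr_ge0 ?powR_ge0 // ltW.
have e_ge0 : 0 <= e by apply: le_trans (normr_ge0 _) (ge 0 _); rewrite normr0 ltW.
have [xN|Nx] := leP `|x| N.
  by have /ler_normlP[_ gxe] := ge x xN; lra.
have NLx : N `^ l <= `|x| `^ l by apply: ge0_ler_powR; rewrite ?nnegrE //; exact: ltW.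
have : K <= K / N `^ l * `|x| `^ l by rewrite mulrAC ler_pdivlMr // ler_wpM2l.
by have /ler_normlP[_ gxK] := gK x; lra.
Qed.

Lemma exists_powR_ge (R : realType) (T l : R) : 0 < l -> exists2 N, 0 < N & T <= N `^ l.
Proof.
move=> l_gt0; exists ((`|T| + 1) `^ l^-1); first by rewrite powR_gt0.
rewrite -powRrM mulVf ?gt_eqF // powRr1 ?addr_ge0 //.
by apply: le_trans (ler_norm T) _; rewrite lerDl.
Qed.

Section DominatedFamily.
Variables (R : realType) (d : nat).
Variables (Omega : Type) (E : (Omega -> R) -> R).
Variables (Alpha : Type) (X : Alpha -> Omega -> 'rV[R]_d).
Variables (Omegab : Type) (Hb : set (Omegab -> R)) (Eb : (Omegab -> R) -> R).
Variables (l : R) (Xb : Omegab -> 'rV[R]_d).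
Hypothesis HEb : sublinear_expectation_space Hb Eb.
Hypothesis l_gt0 : 0 < l.
Hypothesis Hb_growth : forall psi : 'rV[R]_d -> R, borel_fun psi ->
  (exists c : R, forall x, `|psi x| <= c * (1 + `|x| `^ l)) -> Hb (psi \o Xb).
Hypothesis E_dominated : forall a phi psi, Cb phi -> Cb psi ->
  E (phi \o X a) - E (psi \o X a) <= Eb ((phi \o Xb) \- (psi \o Xb)).

Let moment := Eb ((fun x => `|x| `^ l) \o Xb).

Let Hb_moment : Hb ((fun x => `|x| `^ l) \o Xb).
Proof.
apply: Hb_growth; first exact: borel_fun_norm_powR.
by exists 1 => x; rewrite mul1r ger0_norm ?powR_ge0 // lerDr.
Qed.

Lemma expectation_diff_le a phi psi (K e N : R) : Cb phi -> Cb psi -> 0 < N ->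
  (forall x, `|phi x - psi x| <= K) -> (forall x, `|x| <= N -> `|phi x - psi x| <= e) ->
  E (phi \o X a) - E (psi \o X a) <= e + K / N `^ l * moment.
Proof.
move=> Cphi Cpsi N_gt0 K_bound e_bound.
apply: le_trans (E_dominated a Cphi Cpsi) _.
have K_ge0 : 0 <= K := le_trans (normr_ge0 _) (K_bound 0).
have diff_cont : continuous (fun x => phi x - psi x).
  by move=> x; apply: continuousB; [exact: Cphi.1 | exact: Cpsi.1].
rewrite /moment; apply: (sublinear_expectation_le_affine HEb _ Hb_moment).
- have := Hb_growth (continuous_borel_fun diff_cont); apply.
  exists K => x; apply: le_trans (K_bound x) _.
  by rewrite -[leLHS]mulr1 ler_wpM2l // lerDl powR_ge0.
- by rewrite divr_ge0 // ltW // powR_gt0.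
- move=> w; exact: le_growth_powR (ltW l_gt0) K_bound e_bound (Xb w).
Qed.

Lemma expectation_dist_le a phi psi (K e N : R) : Cb phi -> Cb psi -> 0 < N ->
  (forall x, `|phi x - psi x| <= K) -> (forall x, `|x| <= N -> `|phi x - psi x| <= e) ->
  `|E (phi \o X a) - E (psi \o X a)| <= e + K / N `^ l * moment.
Proof.
move=> Cphi Cpsi N_gt0 K_bound e_bound.
rewrite ler_norml expectation_diff_le // andbT lerNl opprB.
by apply: expectation_diff_le => // x; rewrite distrC; [exact: K_bound | exact: e_bound].
Qed.

Lemma expectation_grid_approx phi (eps : R) : Cb phi -> 0 < eps ->
  exists t : grid_code d, forall a, `|E (phi \o X a) - E (grid_fun t \o X a)| <= eps.
Proof.
move=> Cphi eps_gt0; have [M phi_bound] := Cphi.2.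
have e_gt0 : 0 < eps / 2 by rewrite divr_gt0.
pose K := 2 * M + 1.
have [N N_gt0 NK] := exists_powR_ge (K * moment / (eps / 2)) l_gt0.
have [t [tM t_close]] := grid_fun_approx N Cphi.1 phi_bound e_gt0.
have K_bound x : `|phi x - grid_fun t x| <= K.
  apply: le_trans (ler_normB _ _) _.
  by have := grid_fun_bound t x; have := phi_bound x; rewrite /K; lra.
have tail : K / N `^ l * moment <= eps / 2.
  rewrite mulrAC ler_pdivrMr ?powR_gt0 //.
  by rewrite -ler_pdivrMl // mulrC.
exists t => a; rewrite [eps](splitr eps).
apply: le_trans (expectation_dist_le a Cphi (Cb_grid_fun R t) N_gt0 K_bound t_close) _.
by rewrite lerD2l.
Qed.

End DominatedFamily.

Theorem mainTheorem2 (R : realType) (d : nat)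
  (Omega : Type) (H : set (Omega -> R)) (E : (Omega -> R) -> R)
  (Alpha : Type) (X : Alpha -> Omega -> 'rV[R]_d)
  (Omegab : Type) (Hb : set (Omegab -> R)) (Eb : (Omegab -> R) -> R)
  (l : R) (Xb : Omegab -> 'rV[R]_d) :
  nonlinear_expectation_space H E ->
  (forall a phi, Cb phi -> H (phi \o X a)) ->
  sublinear_expectation_space Hb Eb ->
  0 < l ->
  (forall i : 'I_d, Hb (fun w => Xb w ord0 i)) ->
  (forall psi : 'rV[R]_d -> R, borel_fun psi ->
     (exists c : R, forall x, `|psi x| <= c * (1 + `|x| `^ l)) ->
     Hb (psi \o Xb)) ->
  (forall a phi psi, Cb phi -> Cb psi ->
     E (phi \o X a) - E (psi \o X a) <= Eb ((phi \o Xb) \- (psi \o Xb))) ->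
  forall alpha : nat -> Alpha,
  exists n : nat -> nat,
    {homo n : i j / (i < j)%N >-> (i < j)%N} /\
    forall phi, Cb phi -> cauchy_seqR (fun i => E (phi \o X (alpha (n i)))).
Proof.
(* The coordinates of Xb need not be in Hb: the growth hypothesis already
   provides |Xb|^l in Hb. *)
move=> HE HX HEb l_gt0 _ Hb_growth E_dominated alpha.
pose u (t : grid_code d) n := E (grid_fun t \o X (alpha n)).
have u_bounded t : bounded_seqR (u t).
  exists t.2%:R => n; apply: nonlinear_expectation_norm_le HE (HX _ _ (Cb_grid_fun R t)) _.
  by move=> w; exact: grid_fun_bound.
have [s s_homo s_cauchy] := diagonal_cauchy_subseq u_bounded.
exists s; split => // phi Cphi e e_gt0.
have e3_gt0 : 0 < e / 3 by rewrite divr_gt0.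
have [t t_approx] :=
  expectation_grid_approx HEb l_gt0 Hb_growth E_dominated Cphi e3_gt0.
have [N N_cauchy] := s_cauchy t _ e3_gt0.
exists N => i j Ni Nj.
move: (t_approx (alpha (s i))) (t_approx (alpha (s j))) (N_cauchy i j Ni Nj).
rewrite /u /= !ler_norml !ltr_norml => /andP[? ?] /andP[? ?] /andP[? ?].
by apply/andP; split; lra.
Qed.
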